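(* Let $G$ be a bipartite permutation graph with a transitive vertex ordering $<$, and let $M$ be a uniquely restricted matching in $G$ starting with $e'\in E(G)$. Let $e\in E(G)$ be such that $l(e)<l(e')$ and $\{e,e'\}$ is a uniquely restricted matching in $G$. Then $\{e\}\cup M$ is a uniquely restricted matching in $G$ starting with $e$.
   Context: Graphs are finite, simple, undirected. A permutation graph is a graph isomorphic to some $G_\pi$, where for a permutation $\pi$ of $\{1,\dots,n\}$, $G_\pi$ has vertex set $\{1,\dots,n\}$ and edges $ij$ with $(i-j)(\pi(i)-\pi(j))<0$; a bipartite permutation graph is a permutation graph that is bipartite. An ordering $<$ of $V(G)$ is a transitive vertex ordering if for all $u<v<w$: (a) $uv,vw\in E(G)$ implies $uw\in E(G)$, and (b) $uw\in E(G)$ implies $uv\in E(G)$ or $vw\in E(G)$. For an edge $e=uv$, $l(e)=\min_<\{u,v\}$ and $r(e)=\max_<\{u,v\}$. A matching is a set of pairwise vertex-disjoint edges; it is uniquely restricted if no other matching of $G$ matches exactly the same vertex set. A matching $M$ whose edges are labelled $e_1,\dots,e_{|M|}$ with $l(e_1)<l(e_2)<\cdots<l(e_{|M|})$ is said to start with $e_1$. *)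

From mathcomp Require Import all_boot all_order all_fingroup.
Set Implicit Arguments. Unset Strict Implicit. Unset Printing Implicit Defensive.

(* A finite simple graph: vertex type T, adjacency relation adj
   (assumed symmetric and irreflexive in the theorem). *)

(* G_pi for pi : 'S_n: ij is an edge iff (i-j)(pi i - pi j) < 0. *)
Definition perm_adj (n : nat) (pi : 'S_n) (i j : 'I_n) : bool :=
  ((i < j) && (pi j < pi i)) || ((j < i) && (pi i < pi j)).

Definition is_permutation_graph (T : finType) (adj : rel T) : Prop :=
  exists n (pi : 'S_n) (phi : T -> 'I_n),
    bijective phi /\ forall x y, adj x y = perm_adj pi (phi x) (phi y).

Definition is_bipartite (T : finType) (adj : rel T) : Prop :=
  exists c : T -> bool, forall x y, adj x y -> c x != c y.

Definition is_bipartite_permutation_graph (T : finType) (adj : rel T) : Prop :=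
  is_permutation_graph adj /\ is_bipartite adj.

(* A linear ordering of V(G) is given by an injective rank f : T -> nat;
   u < v  iff  f u < f v. *)
Definition transitive_vertex_ordering (T : finType) (adj : rel T) (f : T -> nat) : Prop :=
  injective f /\
  forall u v w, f u < f v -> f v < f w ->
    (adj u v -> adj v w -> adj u w) /\
    (adj u w -> adj u v || adj v w).

Definition is_edge (T : finType) (adj : rel T) (E : {set T}) : bool :=
  [exists u, exists v, adj u v && (E == [set u; v])].

Definition is_matching (T : finType) (adj : rel T) (M : {set {set T}}) : Prop :=
  (forall E, E \in M -> is_edge adj E) /\
  (forall E1 E2, E1 \in M -> E2 \in M -> E1 != E2 -> [disjoint E1 & E2]).

Definition uniquely_restricted (T : finType) (adj : rel T) (M : {set {set T}}) : Prop :=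
  is_matching adj M /\
  forall M', is_matching adj M' -> cover M' = cover M -> M' = M.

(* rank of l(E) = min_< E, i.e. the minimal rank of an endpoint of E. *)
Definition lrank (T : finType) (f : T -> nat) (E : {set T}) : nat :=
  \big[minn/(\max_(y : T) f y)%N]_(x in E) f x.

Definition starts_with (T : finType) (f : T -> nat) (M : {set {set T}}) (E : {set T}) : Prop :=
  E \in M /\ forall E', E' \in M -> lrank f E <= lrank f E'.

From mathcomp Require Import all_boot all_order all_fingroup.
Set Implicit Arguments. Unset Strict Implicit. Unset Printing Implicit Defensive.

(* In a bipartite graph with a transitive vertex ordering every vertex has all
   its neighbours on one side of it, since otherwise axiom (a) would close a
   triangle.  Consequently a set of edges is a uniquely restricted matching
   exactly when no two of its edges form an alternating 4-cycle: if another
   matching covers the same vertices, the ordering forces an alternating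
   4-cycle through the smallest vertex where the two matchings differ.  An
   alternating 4-cycle between e and an edge of M, all of whose vertices lie
   beyond l(e'), can then be transported to one between e and e' or between e'
   and that edge, both of which are excluded. *)

Lemma geq_bigmin_seq (I : eqType) (r : seq I) (P : pred I) (F : I -> nat) m i :
  i \in r -> P i -> \big[minn/m]_(x <- r | P x) F x <= F i.
Proof.
elim: r => // a r IHr; rewrite inE big_cons => /orP[/eqP<- -> | ir Pi].
  exact: geq_minl.
by case: (P a); rewrite ?geq_min IHr ?orbT.
Qed.

Lemma lrank_set2 (T : finType) (f : T -> nat) u v :
  f u <= f v -> lrank f [set u; v] = f u.
Proof.
move=> le_uv; apply/eqP; rewrite eqn_leq; apply/andP; split.
  by apply: geq_bigmin_seq; rewrite ?mem_index_enum ?set21.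
apply: (big_ind (fun m => f u <= m)) => [|m n|x].
- exact: leq_bigmax.
- by rewrite leq_min => -> ->.
- by case/set2P=> ->.
Qed.

Lemma eq_set2 (T : finType) (u v x y : T) :
  [set u; v] = [set x; y] -> (u = x /\ v = y) \/ (u = y /\ v = x).
Proof.
move=> E.
have: u \in [set x; y] by rewrite -E set21.
have: v \in [set x; y] by rewrite -E set22.
have: x \in [set u; v] by rewrite E set21.
have: y \in [set u; v] by rewrite E set22.
by move=> /set2P[] ? /set2P[] ? /set2P[] ? /set2P[] ?; subst; auto.
Qed.

Lemma set2_inj (T : finType) (u x y : T) : [set u; x] = [set u; y] -> x = y.
Proof. by case/eq_set2=> -[? ?]; subst. Qed.

Lemma disjoint_set2 (T : finType) (a b c d : T) :
  [disjoint [set a; b] & [set c; d]] = [&& a != c, a != d, b != c & b != d].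
Proof.
apply/idP/and4P => [dis | [ac ad bc bd]].
  have := disjointFr dis (set21 a b); have := disjointFr dis (set22 a b).
  by rewrite !inE => /norP[-> ->] /norP[-> ->].
apply/pred0P => z /=; rewrite !inE.
by apply/negbTE/andP => -[/orP[]/eqP-> /orP[]/eqP eq]; rewrite eq eqxx in ac ad bc bd.
Qed.

Section Matchings.

Variables (T : finType) (adj : rel T).
Hypotheses (adj_sym : symmetric adj) (adj_irr : irreflexive adj).

Lemma is_edge_set2 u v : adj u v -> is_edge adj [set u; v].
Proof. by move=> uv; apply/existsP; exists u; apply/existsP; exists v; rewrite uv eqxx. Qed.

Lemma is_edge_set2_adj u v : is_edge adj [set u; v] -> adj u v.
Proof.
case/existsP=> x /existsP[y /andP[xy /eqP/eq_set2]].
by case=> -[-> ->]; rewrite // adj_sym.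
Qed.

Lemma is_edge_at E u : is_edge adj E -> u \in E -> exists2 v, adj u v & E = [set u; v].
Proof.
case/existsP=> x /existsP[y /andP[xy /eqP->]] /set2P[]->; first by exists y.
by exists x; rewrite 1?adj_sym // setUC.
Qed.

Lemma matching_edge_eq X E1 E2 v : is_matching adj X ->
  E1 \in X -> E2 \in X -> v \in E1 -> v \in E2 -> E1 = E2.
Proof.
case=> _ dis E1X E2X vE1 vE2; apply/eqP; apply: contraT => neq.
by rewrite (disjointFr (dis _ _ E1X E2X neq) vE1) in vE2.
Qed.

(* The edges up and rq can be exchanged for uq and rp; this includes two edges
   sharing a vertex (alternating_square_meet). *)
Definition alternating_square (E1 E2 : {set T}) :=
  exists u p r q, [/\ E1 = [set u; p], E2 = [set r; q], adj u q & adj r p].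

Definition square_free (X : {set {set T}}) :=
  forall E1 E2, E1 \in X -> E2 \in X -> E1 != E2 -> ~ alternating_square E1 E2.

Lemma alternating_squareC E1 E2 : alternating_square E1 E2 -> alternating_square E2 E1.
Proof. by case=> u [p [r [q [-> -> uq rp]]]]; exists r, q, u, p. Qed.

Lemma alternating_square_meet E1 E2 v : is_edge adj E1 -> is_edge adj E2 ->
  v \in E1 -> v \in E2 -> alternating_square E1 E2.
Proof.
move=> E1e E2e /(is_edge_at E1e)[p vp ->] /(is_edge_at E2e)[q vq ->].
by exists p, v, q, v; rewrite ![[set v; _]]setUC !(adj_sym _ v).
Qed.

Lemma square_free_matching (X : {set {set T}}) :
  (forall E, E \in X -> is_edge adj E) -> square_free X -> is_matching adj X.
Proof.
move=> Xe sqf; split=> // E1 E2 E1X E2X neq; apply: contraT => /pred0Pn[v /andP[vE1 vE2]].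
by case: (sqf _ _ E1X E2X neq); exact: alternating_square_meet (Xe _ E1X) (Xe _ E2X) vE1 vE2.
Qed.

Definition switch (X : {set {set T}}) u p r q :=
  (X :\ [set u; p] :\ [set r; q]) :|: [set [set u; q]; [set r; p]].

Lemma switch_matching X u p r q : is_matching adj X ->
  [set u; p] \in X -> [set r; q] \in X -> [set u; p] != [set r; q] -> adj u q -> adj r p ->
  is_matching adj (switch X u p r q) /\ cover (switch X u p r q) = cover X.
Proof.
move=> mX E1X E2X neq uq rp.
have up : adj u p := is_edge_set2_adj (mX.1 _ E1X).
have rq : adj r q := is_edge_set2_adj (mX.1 _ E2X).
have /and4P[ur _ _ pq] : [&& u != r, u != q, p != r & p != q].
  by rewrite -disjoint_set2; exact: mX.2.
have dF : [disjoint [set u; q] & [set r; p]].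
  have up' : u != p by apply: contraTneq up => ->; rewrite adj_irr.
  have qr : q != r by apply: contraTneq rq => ->; rewrite adj_irr.
  by rewrite disjoint_set2 ur up' qr eq_sym pq.
have FE : [set u; q] :|: [set r; p] = [set u; p] :|: [set r; q].
  by apply/setP => z; rewrite !inE; case: (z == u); case: (z == q); case: (z == r); case: (z == p).
set Y := X :\ [set u; p] :\ [set r; q].
have YX E : E \in Y -> [/\ E \in X, E != [set u; p] & E != [set r; q]].
  by rewrite !in_setD1 => /and3P[].
have dYF E F : E \in Y -> F \in [set [set u; q]; [set r; p]] -> [disjoint E & F].
  case/YX=> EX nE1 nE2 FF.
  have dE : [disjoint E & [set u; p] :|: [set r; q]].
    by rewrite -setI_eq0 setIUr setU_eq0 !setI_eq0 (mX.2 _ _ EX E1X nE1) (mX.2 _ _ EX E2X nE2).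
  by apply: disjointWr dE; rewrite -FE; case/set2P: FF => ->; [exact: subsetUl | exact: subsetUr].
split.
  split=> [E /setUP[/YX[EX _ _] | /set2P[]->] | F1 F2 /setUP[F1Y|F1F] /setUP[F2Y|F2F] neqF].
  - exact: mX.1.
  - exact: is_edge_set2.
  - exact: is_edge_set2.
  - by case/YX: F1Y => F1X _ _; case/YX: F2Y => F2X _ _; exact: mX.2.
  - exact: dYF.
  - by rewrite disjoint_sym; exact: dYF.
  - by move: neqF; case/set2P: F1F => ->; case/set2P: F2F => ->; rewrite ?eqxx ?dF // disjoint_sym.
have coverU (A B : {set {set T}}) : cover (A :|: B) = cover A :|: cover B := bigcup_setU _ _ _.
have XE : X = Y :|: [set [set u; p]; [set r; q]].
  by rewrite setUC -setUA setD1K ?setD1K // in_setD1 eq_sym neq.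
by rewrite /switch {2}XE !coverU !cover1 FE.
Qed.

Lemma uniquely_restricted_square_free X : uniquely_restricted adj X -> square_free X.
Proof.
case=> mX urX E1 E2 E1X E2X neq [u [p [r [q [E1eq E2eq uq rp]]]]].
rewrite {}E1eq in E1X neq; rewrite {}E2eq in E2X neq.
have [mY cY] := switch_matching mX E1X E2X neq uq rp.
have uqX : [set u; q] \in X by rewrite -(urX _ mY cY); apply/setUP; right; exact: set21.
have : q \in [set u; p] by rewrite -(matching_edge_eq mX uqX E1X (set21 u q) (set21 u p)) set22.
case/set2P=> [qu | qp]; first by rewrite qu adj_irr in uq.
by move/eqP: neq; apply; apply: (matching_edge_eq mX E1X E2X (set22 u p)); rewrite -qp set22.
Qed.

Lemma cover_setDC A B : is_matching adj A -> is_matching adj B -> cover A = cover B ->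
  cover (A :\: B) = cover (B :\: A).
Proof.
have sub (A' B' : {set {set T}}) :
    is_matching adj A' -> is_matching adj B' -> cover A' = cover B' ->
    cover (B' :\: A') \subset cover (A' :\: B').
  move=> mA mB cAB; apply/subsetP => v /bigcupP[E /setDP[EB EA] vE].
  have : v \in cover A' by rewrite cAB; apply/bigcupP; exists E.
  case/bigcupP=> E' E'A vE'; apply/bigcupP; exists E' => //; apply/setDP; split=> //.
  by apply: contra EA => E'B; rewrite -(matching_edge_eq mB E'B EB vE' vE).
by move=> mA mB cAB; apply/eqP; rewrite eqEsubset !sub.
Qed.

Lemma cover_setD_neq0 A B : is_matching adj A -> is_matching adj B -> cover A = cover B ->
  A != B -> exists w, w \in cover (A :\: B).
Proof.
move=> mA mB cAB neq.
have [E EAB] : exists E, E \in (A :\: B) :|: (B :\: A).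
  apply/set0Pn; apply: contra neq; rewrite setU_eq0 !setD_eq0 => /andP[AB BA].
  by rewrite eqEsubset AB BA.
have [w wE] : exists w, w \in E.
  have /existsP[x /existsP[y /andP[_ /eqP->]]] : is_edge adj E.
    by case/setUP: EAB => /setDP[EX _]; [exact: mA.1 | exact: mB.1].
  by exists x; exact: set21.
exists w; case/setUP: EAB => EAB; last rewrite (cover_setDC mA mB cAB);
  by apply/bigcupP; exists E.
Qed.

Lemma card_setD_switch (N X : {set {set T}}) u p r q :
  [set u; p] \notin N -> [set r; q] \notin N -> [set u; q] \in N :\: X ->
  #|N :\: switch X u p r q| < #|N :\: X|.
Proof.
move=> upN rqN uqNX; apply: proper_card; apply/properP; split.
  apply/subsetP => E /setDP[EN EsX]; apply/setDP; split=> //.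
  apply: contra EsX => EX; apply/setUP; left; rewrite !in_setD1 EX andbT.
  by apply/andP; split; apply: contraTneq EN => ->.
exists [set u; q] => //; rewrite inE negb_and negbK.
by apply/orP; left; apply/setUP; right; exact: set21.
Qed.

End Matchings.

Section TransitiveOrdering.

Variables (T : finType) (adj : rel T) (f : T -> nat).
Hypotheses (adj_sym : symmetric adj) (adj_irr : irreflexive adj).
Hypotheses (adj_bip : is_bipartite adj) (f_tvo : transitive_vertex_ordering adj f).

Let f_inj : injective f := f_tvo.1.

Lemma no_monotone_path3 u v w : adj u v -> adj v w -> f u < f v -> f v < f w -> False.
Proof.
case: adj_bip => c c_col uv vw fuv fvw.
have uw := (f_tvo.2 u v w fuv fvw).1 uv vw.
by move: (c_col _ _ uv) (c_col _ _ vw) (c_col _ _ uw); case: (c u); case: (c v); case: (c w).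
Qed.

Lemma neighbors_above v u w : adj v u -> adj v w -> f v < f w -> f v < f u.
Proof.
move=> vu vw fvw; case: (ltngtP (f v) (f u)) => // [fuv | /f_inj vu_eq].
  by case: (no_monotone_path3 _ vw fuv fvw); rewrite adj_sym.
by rewrite -vu_eq adj_irr in vu.
Qed.

Lemma neighbors_below v u w : adj v u -> adj v w -> f w < f v -> f u < f v.
Proof.
move=> vu vw fwv; case: (ltngtP (f u) (f v)) => // [fvu | /f_inj uv_eq].
  by case: (no_monotone_path3 _ vu fwv fvu); rewrite adj_sym.
by rewrite uv_eq adj_irr in vu.
Qed.

Lemma inner_adj_right a b v w : adj a b -> f a < f v -> f v < f b ->
  adj v w -> f v < f w -> adj v b.
Proof.
move=> ab fav fvb vw fvw; case/orP: ((f_tvo.2 a v b fav fvb).2 ab) => // av.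
have := neighbors_above (u := a) _ vw fvw; rewrite adj_sym => /(_ av).
by rewrite ltnNge ltnW.
Qed.

Lemma inner_adj_left a b v w : adj a b -> f a < f v -> f v < f b ->
  adj v w -> f w < f v -> adj a v.
Proof.
move=> ab fav fvb vw fwv; case/orP: ((f_tvo.2 a v b fav fvb).2 ab) => // vb.
by have := neighbors_below vb vw fwv; rewrite ltnNge ltnW.
Qed.

Lemma is_edge_oriented E : is_edge adj E -> exists a b, [/\ E = [set a; b], adj a b & f a < f b].
Proof.
case/existsP=> x /existsP[y /andP[xy /eqP->]].
case: (ltngtP (f x) (f y)) => [fxy | fyx | /f_inj xy_eq]; first by exists x, y.
  by exists y, x; rewrite setUC adj_sym.
by rewrite xy_eq adj_irr in xy.
Qed.

Lemma alternating_square_oriented a b c d : adj a b -> adj c d -> f a < f b -> f c < f d ->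
  alternating_square adj [set a; b] [set c; d] -> adj a d /\ adj c b.
Proof.
move=> ab cd fab fcd [u [p [r [q [/eq_set2 E1 /eq_set2 E2 uq rp]]]]].
have nac : ~~ adj a c.
  apply/negP => ac; case: (ltngtP (f a) (f c)) => [fac | fca | /f_inj ac_eq].
  - exact: no_monotone_path3 ac cd fac fcd.
  - by apply: (no_monotone_path3 _ ab fca fab); rewrite adj_sym.
  - by rewrite ac_eq adj_irr in ac.
case: E1 => -[? ?]; case: E2 => -[? ?]; subst.
- by [].
- by rewrite (negbTE nac) in uq.
- by rewrite adj_sym (negbTE nac) in rp.
- by split; rewrite adj_sym.
Qed.

Lemma alternating_square_at_min_vertex A B u m n :
  is_matching adj A -> is_matching adj B -> cover A = cover B ->
  (forall v, v \in cover (A :\: B) -> f u <= f v) ->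
  [set u; m] \in A :\: B -> [set u; n] \in B :\: A -> f n < f m ->
  exists2 r, [set r; n] \in A :\: B & adj r m.
Proof.
move=> mA mB cAB umin /setDP[umA _] /setDP[unB unA] fnm.
have um : adj u m := is_edge_set2_adj adj_sym (mA.1 _ umA).
have un : adj u n := is_edge_set2_adj adj_sym (mB.1 _ unB).
have above_u v : v \in cover (A :\: B) -> v != u -> f u < f v.
  move=> vAB vu; rewrite ltn_neqAle umin // andbT.
  by apply: contra vu => /eqP/f_inj->.
have fun_ : f u < f n.
  apply: above_u; last by apply: contraTneq un => ->; rewrite adj_irr.
  rewrite (cover_setDC mA mB cAB); apply/bigcupP; exists [set u; n]; last exact: set22.
  by rewrite inE unB unA.
have : n \in cover A by rewrite cAB; apply/bigcupP; exists [set u; n]; rewrite ?set22.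
case/bigcupP=> E EA /(is_edge_at adj_sym (mA.1 _ EA))[r nr E_eq].
rewrite {}E_eq setUC in EA.
have rnB : [set r; n] \notin B.
  by apply: contra unA => rnB; rewrite -(matching_edge_eq mB rnB unB (set22 r n) (set22 u n)).
have rnAB : [set r; n] \in A :\: B by rewrite inE rnB EA.
have fur : f u < f r.
  apply: above_u; first by apply/bigcupP; exists [set r; n]; rewrite ?set21.
  by apply: contraNneq unA => <-.
have frn : f r < f n by apply: (neighbors_below nr _ fun_); rewrite adj_sym.
by exists r => //; apply: inner_adj_right um fur (ltn_trans frn fnm) _ frn; rewrite adj_sym.
Qed.

Lemma square_free_uniquely_restricted (N : {set {set T}}) :
  (forall E, E \in N -> is_edge adj E) -> square_free adj N -> uniquely_restricted adj N.
Proof.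
move=> Ne sqf; have mN := square_free_matching adj_sym Ne sqf; split=> // A.
have [k] := ubnP #|N :\: A|; elim: k A => // k IHk A ltk mA cAN.
case: (eqVneq A N) => // neq.
have [w w_in] := cover_setD_neq0 mA mN cAN neq.
case: (arg_minnP f (P := fun v => v \in cover (A :\: N)) w_in) => u /bigcupP[E1 E1AN uE1] umin.
have [m um E1_eq] := is_edge_at adj_sym (mA.1 _ (setDP E1AN).1) uE1.
rewrite {}E1_eq in E1AN; have [umA umN] := setDP E1AN.
have : u \in cover N by rewrite -cAN; apply/bigcupP; exists [set u; m]; rewrite ?set21.
case/bigcupP=> E2 E2N /(is_edge_at adj_sym (mN.1 _ E2N))[n un E2_eq].
rewrite {}E2_eq in E2N.
have mn : m != n by apply: contraNneq umN => ->.
have unAN : [set u; n] \in N :\: A.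
  rewrite inE E2N andbT; apply: contra mn => unA; apply/eqP/(@set2_inj _ u).
  exact: matching_edge_eq mA umA unA (set21 u m) (set21 u n).
(* Both cases end with the alternating square {un, rm} in N; when f n < f m it
   is found in the switched matching, which is closer to N. *)
have no_square r : [set r; m] \in N -> adj r n -> False.
  move=> rmN rn; apply: (sqf _ _ E2N rmN); last by exists u, n, r, m.
  apply/eqP => /eq_set2[[_ nm] | [ur _]]; first by rewrite nm eqxx in mn.
  by rewrite ur adj_irr in um.
case: (ltngtP (f n) (f m)) => [fnm | fmn | /f_inj nm]; last by rewrite nm eqxx in mn.
  have [r /setDP[rnA rnN] rm] := alternating_square_at_min_vertex mA mN cAN umin E1AN unAN fnm.
  have neq' : [set u; m] != [set r; n].
    apply/eqP => /eq_set2[[_ mn'] | [un' _]]; first by rewrite mn' eqxx in mn.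
    by rewrite un' adj_irr in un.
  have [mA' cA'] := switch_matching adj_sym adj_irr mA umA rnA neq' un rm.
  have ltA' : #|N :\: switch A u m r n| < k.
    by apply: leq_trans (card_setD_switch umN rnN unAN) _; rewrite -ltnS.
  have A'N := IHk _ ltA' mA' (etrans cA' cAN).
  have rn : adj r n := is_edge_set2_adj adj_sym (mA.1 _ rnA).
  by case: (no_square r _ rn); rewrite -A'N; apply/setUP; right; exact: set22.
have umin' v : v \in cover (N :\: A) -> f u <= f v by rewrite -(cover_setDC mA mN cAN); exact: umin.
have [r /setDP[rmN _] rn] := alternating_square_at_min_vertex mN mA (esym cAN) umin' unAN E1AN fmn.
by case: (no_square r rmN rn).
Qed.

Lemma alternating_square_shift a b x y c d :
  adj a b -> adj x y -> adj c d -> f a < f b -> f x < f y -> f c < f d ->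
  f a < f x -> f x <= f c -> adj a d -> adj c b ->
  alternating_square adj [set a; b] [set x; y] \/ alternating_square adj [set x; y] [set c; d].
Proof.
move=> ab xy cd fab fxy fcd fax fxc ad cb.
have sq_ab_xy := alternating_square_meet adj_sym (is_edge_set2 ab) (is_edge_set2 xy).
have sq_xy_cd := alternating_square_meet adj_sym (is_edge_set2 xy) (is_edge_set2 cd).
rewrite leq_eqVlt in fxc; case/orP: fxc => [/eqP/f_inj xc | fxc].
  by right; apply: (sq_xy_cd x); rewrite ?set21 // xc set21.
have fcb : f c < f b := neighbors_above cb cd fcd.
have xb : adj x b := inner_adj_right ab fax (ltn_trans fxc fcb) xy fxy.
have yx : adj y x by rewrite adj_sym.
case: (ltngtP (f y) (f b)) => [fyb | fby | /f_inj yb].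
- by left; exists a, b, x, y; split=> //; exact: inner_adj_left ab (ltn_trans fax fxy) fyb yx fxy.
- have cy : adj c y := inner_adj_right xy fxc (ltn_trans fcb fby) cd fcd.
  case: (ltngtP (f d) (f y)) => [fdy | fyd | /f_inj dy].
  + right; exists x, y, c, d; split=> //.
    by apply: inner_adj_left xy (ltn_trans fxc fcd) fdy _ fcd; rewrite adj_sym.
  + by left; exists a, b, x, y; split=> //; exact: inner_adj_left ad (ltn_trans fax fxy) fyd yx fxy.
  + by right; apply: (sq_xy_cd y); rewrite ?set22 // -dy set22.
- by left; apply: (sq_ab_xy b); rewrite ?set22 // -yb set22.
Qed.

Lemma no_alternating_square_before M e e' g :
  uniquely_restricted adj M -> starts_with f M e' -> is_edge adj e -> lrank f e < lrank f e' ->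
  uniquely_restricted adj [set e; e'] -> g \in M -> ~ alternating_square adj e g.
Proof.
move=> URM [e'M e'min] ee lt UR2 gM.
have ee' : e != e' by apply: contraTneq lt => ->; rewrite ltnn.
have no_sq_ee' := uniquely_restricted_square_free adj_sym adj_irr UR2 (set21 e e') (set22 e e') ee'.
have no_sq_e'g := uniquely_restricted_square_free adj_sym adj_irr URM e'M gM.
case: (eqVneq g e') => [-> // | ge'].
have [a [b [e_eq ab fab]]] := is_edge_oriented ee.
have [x [y [e'_eq xy fxy]]] := is_edge_oriented (URM.1.1 _ e'M).
have [c [d [g_eq cd fcd]]] := is_edge_oriented (URM.1.1 _ gM).
have lr_e := lrank_set2 (ltnW fab); have lr_e' := lrank_set2 (ltnW fxy).
have lr_g := lrank_set2 (ltnW fcd).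
have fxc : f x <= f c by rewrite -lr_e' -lr_g -e'_eq -g_eq e'min.
rewrite e_eq e'_eq lr_e lr_e' in lt.
rewrite e_eq g_eq => /(alternating_square_oriented ab cd fab fcd)[ad cb].
case: (alternating_square_shift ab xy cd fab fxy fcd lt fxc ad cb).
  by rewrite -e_eq -e'_eq.
by rewrite -e'_eq -g_eq; apply: no_sq_e'g; rewrite eq_sym.
Qed.

End TransitiveOrdering.

Theorem corollary2 (T : finType) (adj : rel T) (f : T -> nat)
  (M : {set {set T}}) (e e' : {set T}) :
  symmetric adj -> irreflexive adj ->
  is_bipartite_permutation_graph adj ->
  transitive_vertex_ordering adj f ->
  uniquely_restricted adj M -> starts_with f M e' ->
  is_edge adj e -> is_edge adj e' ->
  lrank f e < lrank f e' ->
  uniquely_restricted adj [set e; e'] ->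
  uniquely_restricted adj (e |: M) /\ starts_with f (e |: M) e.
Proof.
move=> sym irr [_ bip] tvo URM e'_first ee _ lt UR2.
have no_sq_e := no_alternating_square_before sym irr bip tvo URM e'_first ee lt UR2.
split.
  apply: (square_free_uniquely_restricted sym irr bip tvo) => // [E /setU1P[-> // | EM] | E1 E2].
    exact: URM.1.1.
  move=> /setU1P[-> | E1M] /setU1P[-> | E2M] neq; first by rewrite eqxx in neq.
  - exact: no_sq_e.
  - by move/alternating_squareC; exact: no_sq_e.
  - exact: (uniquely_restricted_square_free sym irr URM E1M E2M neq).
split=> [|E /setU1P[-> // | EM]]; first exact: setU11.
exact: ltnW (leq_trans lt (e'_first.2 _ EM)).
Qed.
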